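(* Let $f\in C^2([0,\infty))$ satisfy $f(u)>0$ and $f'(u)>0$ for all $u>0$, assume $f$ is log-concave, i.e. $f''(u)f(u)-f'(u)^2<0$ for all $u>0$, and assume moreover that \[ uf'(u)>f(u)\quad\text{for all } u>0 . \] Let $u(r)$ be any positive solution of \[ u''+\frac{1}{r}u'+f(u)=0,\quad 0<r<1,\qquad u'(0)=u(1)=0 . \] Then $u$ is non-singular, i.e. the linearized problem \[ w''+\frac{1}{r}w'+f'(u(r))w=0,\quad 0<r<1,\qquad w'(0)=w(1)=0 \] has only the trivial solution $w\equiv 0$. *)

From Stdlib Require Import Reals.
From Coquelicot Require Import Coquelicot.
Open Scope R_scope.

(* A C^2 function on [0,oo) always extends to a C^2
   function on R, and only the values on [0,oo) matter. *)
Definition C2_R (f : R -> R) : Prop :=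
  (forall x, ex_derive f x) /\
  (forall x, ex_derive (Derive f) x) /\
  (forall x, continuous (Derive_n f 2) x).

Definition cont_on_01 (g : R -> R) : Prop :=
  forall r, 0 <= r <= 1 ->
    filterlim g (within (fun x => 0 <= x <= 1) (locally r)) (locally (g r)).

Definition rderiv0_zero (g : R -> R) : Prop :=
  filterlim (fun h => (g h - g 0) / h) (at_right 0) (locally 0).

Definition radial_solution (q : R -> R -> R) (g : R -> R) : Prop :=
  cont_on_01 g /\
  (forall r, 0 < r < 1 -> ex_derive g r /\ ex_derive (Derive g) r) /\
  (forall r, 0 < r < 1 ->
     Derive (Derive g) r + / r * Derive g r + q r (g r) = 0) /\
  rderiv0_zero g /\
  g 1 = 0.

From Stdlib Require Import Reals Lra Classical.
From Coquelicot Require Import Coquelicot.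
Open Scope R_scope.

(* Sturm comparison with Wronskians.  Replacing w by -w, and using uniqueness for the
   linear equation when w(0) = 0, we may assume w(0) > 0; let x1 be the first zero of w.
   The Wronskian W = r (u' w - u w') satisfies W' = r w (u f'(u) - f(u)) > 0 on (0, x1) and
   vanishes at 0+ and at 1-, so x1 < 1 and w'(x1) < 0; let x2 <= 1 be the next zero of w.
   With c = - x1 u'(x1) > 0, the Wronskian P of v = r u' + c and w satisfies
   P' = r w (c f'(u) - 2 f(u)) and vanishes at 0+ and at x1, so c f'(u(s)) >= 2 f(u(s)) for
   some s < x1.  Since f/f' increases (log-concavity) and u decreases, c f'(u) > 2 f(u)
   beyond s; hence P < 0 on (x1, x2), which forces w' < 0 there, contradicting w(x2) = 0. *)

(** * One-sided limits *)

Lemma ball_R (x e y : R) : ball x e y <-> Rabs (y - x) < e.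
Proof. reflexivity. Qed.

Lemma at_right_iff (x : R) (P : R -> Prop) :
  at_right x P <-> exists d, 0 < d /\ forall t, x < t < x + d -> P t.
Proof.
  split.
  - intros [d Hd]. exists d. split; [apply cond_pos|].
    intros t Ht. apply Hd; [|lra]. apply ball_R. rewrite Rabs_right; lra.
  - intros [d [Hd HP]]. exists (mkposreal d Hd). intros t Ht Hxt.
    change (Rabs (t - x) < d) in Ht. rewrite Rabs_right in Ht by lra.
    apply HP. lra.
Qed.

Lemma at_left_iff (x : R) (P : R -> Prop) :
  at_left x P <-> exists d, 0 < d /\ forall t, x - d < t < x -> P t.
Proof.
  split.
  - intros [d Hd]. exists d. split; [apply cond_pos|].
    intros t Ht. apply Hd; [|lra]. apply ball_R. rewrite Rabs_left; lra.
  - intros [d [Hd HP]]. exists (mkposreal d Hd). intros t Ht Htx.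
    change (Rabs (t - x) < d) in Ht. rewrite Rabs_left in Ht by lra.
    apply HP. lra.
Qed.

Lemma at_right_of_interval (a b : R) (P : R -> Prop) : a < b ->
  (forall t, a < t < b -> P t) -> at_right a P.
Proof.
  intros Hab HP. apply at_right_iff. exists (b - a). split; [lra|]. intros t Ht. apply HP. lra.
Qed.

Lemma at_left_of_interval (a b : R) (P : R -> Prop) : a < b ->
  (forall t, a < t < b -> P t) -> at_left b P.
Proof.
  intros Hab HP. apply at_left_iff. exists (b - a). split; [lra|]. intros t Ht. apply HP. lra.
Qed.

Section Filter_limits.
Context {T : Type} {F : (T -> Prop) -> Prop}.

Lemma lim_le_const {FF : ProperFilter F} (g : T -> R) l c :
  filterlim g F (locally l) -> F (fun t => g t <= c) -> l <= c.
Proof. intros Hg Hc. exact (filterlim_le g (fun _ => c) l c Hc Hg (filterlim_const c)). Qed.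

Lemma lim_ge_const {FF : ProperFilter F} (g : T -> R) l c :
  filterlim g F (locally l) -> F (fun t => c <= g t) -> c <= l.
Proof. intros Hg Hc. exact (filterlim_le (fun _ => c) g c l Hc (filterlim_const c) Hg). Qed.

Lemma lim_eq_const {FF : ProperFilter F} (g : T -> R) l c :
  filterlim g F (locally l) -> F (fun t => g t = c) -> l = c.
Proof.
  intros Hg Hc. apply Rle_antisym.
  - apply (lim_le_const g); [exact Hg|]. revert Hc; apply filter_imp; intros t ->; lra.
  - apply (lim_ge_const g); [exact Hg|]. revert Hc; apply filter_imp; intros t ->; lra.
Qed.

Lemma eventually_pos_of_lim {FF : Filter F} (g : T -> R) l :
  filterlim g F (locally l) -> 0 < l -> F (fun t => 0 < g t).
Proof.
  intros Hg Hl. generalize (proj1 (filterlim_locally g l) Hg (mkposreal l Hl)).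
  apply filter_imp. intros t Ht. change (Rabs (g t - l) < l) in Ht.
  pose proof (Rle_abs (- (g t - l))). rewrite Rabs_Ropp in *. lra.
Qed.

Lemma filterlim_mult_bounded_0 {FF : Filter F} (g h : T -> R) M :
  filterlim g F (locally 0) -> F (fun t => Rabs (h t) <= M) ->
  filterlim (fun t => g t * h t) F (locally 0).
Proof.
  intros Hg Hh. apply filterlim_locally. intros eps.
  assert (HM : 0 < Rabs M + 1) by (pose proof (Rabs_pos M); lra).
  assert (Heps : 0 < eps / (Rabs M + 1)) by (apply Rdiv_lt_0_compat; [apply cond_pos|lra]).
  generalize (filter_and _ _ (proj1 (filterlim_locally g 0) Hg (mkposreal _ Heps)) Hh).
  apply filter_imp. intros t [Hgt Hht]. apply ball_R.
  change (Rabs (g t - 0) < eps / (Rabs M + 1)) in Hgt.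
  rewrite Rminus_0_r in *. rewrite Rabs_mult.
  apply Rle_lt_trans with (Rabs (g t) * (Rabs M + 1)).
  - apply Rmult_le_compat_l; [apply Rabs_pos|]. pose proof (Rle_abs M). lra.
  - apply Rlt_le_trans with (eps / (Rabs M + 1) * (Rabs M + 1)).
    + apply Rmult_lt_compat_r; lra.
    + right. field. lra.
Qed.

Lemma filterlim_bounded_mult_0 {FF : Filter F} (g h : T -> R) M :
  F (fun t => Rabs (h t) <= M) -> filterlim g F (locally 0) ->
  filterlim (fun t => h t * g t) F (locally 0).
Proof.
  intros Hh Hg. apply (filterlim_ext (fun t => g t * h t)); [intros; ring|].
  exact (filterlim_mult_bounded_0 g h M Hg Hh).
Qed.

Lemma filterlim_minus_0 {FF : Filter F} (g h : T -> R) :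
  filterlim g F (locally 0) -> filterlim h F (locally 0) ->
  filterlim (fun t => g t - h t) F (locally 0).
Proof.
  intros Hg Hh. apply filterlim_locally. intros eps.
  assert (Heps : 0 < eps / 2) by (pose proof (cond_pos eps); lra).
  generalize (filter_and _ _ (proj1 (filterlim_locally g 0) Hg (mkposreal _ Heps))
                             (proj1 (filterlim_locally h 0) Hh (mkposreal _ Heps))).
  apply filter_imp. intros t [Hgt Hht]. apply ball_R.
  change (Rabs (g t - 0) < eps / 2) in Hgt. change (Rabs (h t - 0) < eps / 2) in Hht.
  rewrite Rminus_0_r in *. eapply Rle_lt_trans; [apply Rabs_triang|].
  rewrite Rabs_Ropp. lra.
Qed.

End Filter_limits.

(** * Monotonicity and limits *)

Lemma mean_value (g dg : R -> R) a b : a < b ->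
  (forall c, a <= c <= b -> is_derive g c (dg c)) ->
  exists c, a < c < b /\ g b - g a = dg c * (b - a).
Proof.
  intros Hab Hd. destruct (MVT_cor2 g dg a b Hab) as [c [E Hc]].
  - intros c Hc. apply is_derive_Reals. auto.
  - exists c. auto.
Qed.

Lemma lt_of_deriv_pos (g dg : R -> R) a b : a < b ->
  (forall c, a <= c <= b -> is_derive g c (dg c)) ->
  (forall c, a < c < b -> 0 < dg c) -> g a < g b.
Proof.
  intros Hab Hd Hpos. destruct (mean_value g dg a b Hab Hd) as [c [Hc E]].
  pose proof (Rmult_lt_0_compat (dg c) (b - a) (Hpos c Hc) ltac:(lra)). lra.
Qed.

Lemma lt_of_deriv_neg (g dg : R -> R) a b : a < b ->
  (forall c, a <= c <= b -> is_derive g c (dg c)) ->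
  (forall c, a < c < b -> dg c < 0) -> g b < g a.
Proof.
  intros Hab Hd Hneg.
  assert (Hopp : - g a < - g b).
  { apply (lt_of_deriv_pos (fun t => - g t) (fun t => - dg t) a b Hab).
    - intros c Hc. apply (is_derive_opp g c (dg c)), Hd, Hc.
    - intros c Hc. pose proof (Hneg c Hc). lra. }
  lra.
Qed.

Lemma abs_sub_le_of_deriv_bound (g dg : R -> R) a b D : a < b ->
  (forall c, a <= c <= b -> is_derive g c (dg c)) ->
  (forall c, a < c < b -> Rabs (dg c) <= D) -> Rabs (g b - g a) <= D * (b - a).
Proof.
  intros Hab Hd HD. destruct (mean_value g dg a b Hab Hd) as [c [Hc ->]].
  rewrite Rabs_mult, (Rabs_right (b - a)) by lra.
  apply Rmult_le_compat_r; [lra|]. exact (HD c Hc).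
Qed.

Lemma abs_sub_le_of_at_right (g : R -> R) a b l L : a < b ->
  filterlim g (at_right a) (locally l) ->
  (forall s, a < s < b -> Rabs (g b - g s) <= L) -> Rabs (g b - l) <= L.
Proof.
  intros Hab Hg HL. apply Rle_plus_epsilon. intros eps Heps.
  destruct (proj1 (at_right_iff a _) (proj1 (filterlim_locally g l) Hg (mkposreal eps Heps)))
    as [d [Hd Hnear]].
  set (s := a + Rmin d (b - a) / 2).
  assert (Hm : 0 < Rmin d (b - a)) by (apply Rmin_pos; lra).
  pose proof (Rmin_l d (b - a)). pose proof (Rmin_r d (b - a)).
  specialize (Hnear s ltac:(unfold s; lra)). change (Rabs (g s - l) < eps) in Hnear.
  replace (g b - l) with ((g b - g s) + (g s - l)) by ring.
  eapply Rle_trans; [apply Rabs_triang|]. specialize (HL s ltac:(unfold s; lra)). lra.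
Qed.

Lemma lim_right_lt_of_deriv_pos (g dg : R -> R) a b l :
  (forall c, a < c < b -> is_derive g c (dg c)) -> (forall c, a < c < b -> 0 < dg c) ->
  filterlim g (at_right a) (locally l) -> forall t, a < t < b -> l < g t.
Proof.
  intros Hd Hpos Hg t Ht. set (m := (a + t) / 2).
  assert (Hmono : forall s s', a < s < s' -> s' < b -> g s < g s').
  { intros s s' Hs Hs'. apply (lt_of_deriv_pos g dg); [lra| |].
    - intros c Hc. apply Hd. lra.
    - intros c Hc. apply Hpos. lra. }
  apply Rle_lt_trans with (g m); [|apply Hmono; unfold m; lra].
  apply (lim_le_const g l (g m) Hg). apply (at_right_of_interval a m); [unfold m; lra|].
  intros s Hs. left. apply Hmono; unfold m in *; lra.
Qed.

Lemma lim_left_gt_of_deriv_pos (g dg : R -> R) a b l :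
  (forall c, a < c < b -> is_derive g c (dg c)) -> (forall c, a < c < b -> 0 < dg c) ->
  filterlim g (at_left b) (locally l) -> forall t, a < t < b -> g t < l.
Proof.
  intros Hd Hpos Hg t Ht. set (m := (t + b) / 2).
  assert (Hmono : forall s s', a < s < s' -> s' < b -> g s < g s').
  { intros s s' Hs Hs'. apply (lt_of_deriv_pos g dg); [lra| |].
    - intros c Hc. apply Hd. lra.
    - intros c Hc. apply Hpos. lra. }
  apply Rlt_le_trans with (g m); [apply Hmono; unfold m; lra|].
  apply (lim_ge_const g l (g m) Hg). apply (at_left_of_interval m b); [unfold m; lra|].
  intros s Hs. left. apply Hmono; unfold m in *; lra.
Qed.

Lemma filterlim_opp_R {F : (R -> Prop) -> Prop} (g : R -> R) l :
  filterlim g F (locally l) -> filterlim (fun t => - g t) F (locally (- l)).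
Proof. intros Hg. exact (filterlim_comp _ _ _ g opp F _ _ Hg (filterlim_opp l)). Qed.

Lemma lim_right_gt_of_deriv_neg (g dg : R -> R) a b l :
  (forall c, a < c < b -> is_derive g c (dg c)) -> (forall c, a < c < b -> dg c < 0) ->
  filterlim g (at_right a) (locally l) -> forall t, a < t < b -> g t < l.
Proof.
  intros Hd Hneg Hg t Ht.
  enough (- l < - g t) by lra.
  apply (lim_right_lt_of_deriv_pos (fun t => - g t) (fun t => - dg t) a b); auto.
  - intros c Hc. apply (is_derive_opp g c (dg c)), Hd, Hc.
  - intros c Hc. pose proof (Hneg c Hc). lra.
  - apply filterlim_opp_R, Hg.
Qed.

Lemma lim_left_lt_of_deriv_neg (g dg : R -> R) a b l :
  (forall c, a < c < b -> is_derive g c (dg c)) -> (forall c, a < c < b -> dg c < 0) ->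
  filterlim g (at_left b) (locally l) -> forall t, a < t < b -> l < g t.
Proof.
  intros Hd Hneg Hg t Ht.
  enough (- g t < - l) by lra.
  apply (lim_left_gt_of_deriv_pos (fun t => - g t) (fun t => - dg t) a b); auto.
  - intros c Hc. apply (is_derive_opp g c (dg c)), Hd, Hc.
  - intros c Hc. pose proof (Hneg c Hc). lra.
  - apply filterlim_opp_R, Hg.
Qed.

Lemma eventually_neg_of_deriv_neg (g : R -> R) x l :
  is_derive g x l -> l < 0 -> g x = 0 -> at_right x (fun t => g t < 0).
Proof.
  intros Hd Hl Hx. apply is_derive_Reals in Hd.
  destruct (Hd (- l) ltac:(lra)) as [d Hnear]. apply at_right_iff.
  exists d. split; [apply cond_pos|]. intros t Ht.
  specialize (Hnear (t - x) ltac:(lra) ltac:(rewrite Rabs_right; lra)).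
  replace (x + (t - x)) with t in Hnear by ring. rewrite Hx, Rminus_0_r in Hnear.
  assert (Hq : g t / (t - x) < 0) by (pose proof (Rle_abs (g t / (t - x) - l)); lra).
  destruct (Rlt_or_le (g t) 0) as [Hneg|Hnn]; [exact Hneg|].
  assert (0 <= g t / (t - x)) by (apply Rdiv_le_0_compat; lra). lra.
Qed.

Lemma eq_0_of_geometric_bound x K : (forall n, Rabs x <= K * (/ 2) ^ n) -> x = 0.
Proof.
  intros Hbound. apply NNPP. intros Hx.
  assert (Hpos : 0 < Rabs x) by (apply Rabs_pos_lt, Hx).
  assert (HK : 0 < Rabs K + 1) by (pose proof (Rabs_pos K); lra).
  destruct (pow_lt_1_zero (/ 2) ltac:(rewrite Rabs_right; lra) (Rabs x / (Rabs K + 1))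
              ltac:(apply Rdiv_lt_0_compat; lra)) as [N HN].
  specialize (HN N (le_n N)). rewrite Rabs_right in HN by (apply Rle_ge, pow_le; lra).
  specialize (Hbound N).
  assert (Hlt : K * (/ 2) ^ N < (Rabs K + 1) * (Rabs x / (Rabs K + 1))).
  { apply Rle_lt_trans with ((Rabs K + 1) * (/ 2) ^ N).
    - pose proof (pow_le (/ 2) N ltac:(lra)). pose proof (Rle_abs K). nra.
    - apply Rmult_lt_compat_l; lra. }
  replace ((Rabs K + 1) * (Rabs x / (Rabs K + 1))) with (Rabs x) in Hlt by (field; lra).
  lra.
Qed.

(** * Real induction and continuity on [0, 1] *)

Lemma interval_induction (P : R -> Prop) a b : a <= b ->
  (forall x, a <= x <= b -> (forall t, a <= t < x -> P t) -> P x) ->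
  (forall x, a <= x < b -> (forall t, a <= t <= x -> P t) -> at_right x P) ->
  forall x, a <= x <= b -> P x.
Proof.
  intros Hab Hclosed Hopen.
  set (E := fun x => a <= x <= b /\ forall t, a <= t < x -> P t).
  destruct (completeness E) as [s [Hub Hlub]].
  - exists b. intros x [Hx _]. lra.
  - exists a. split; [lra|]. intros t Ht. lra.
  assert (Has : a <= s) by (apply Hub; split; [lra|intros t Ht; lra]).
  assert (Hsb : s <= b) by (apply Hlub; intros x [Hx _]; lra).
  assert (Hbelow : forall t, a <= t < s -> P t).
  { intros t Ht. apply NNPP. intros HPt.
    enough (s <= t) by lra. apply Hlub. intros x [Hx HPx].
    apply Rnot_lt_le. intros Htx. exact (HPt (HPx t ltac:(lra))). }
  assert (HPs : P s) by (apply Hclosed; [lra|exact Hbelow]).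
  assert (Hs : s = b).
  { apply Rle_antisym; [exact Hsb|]. apply Rnot_lt_le. intros Hlt.
    assert (Hupto : forall t, a <= t <= s -> P t).
    { intros t Ht. destruct (Req_dec t s) as [->|Hts]; [exact HPs|apply Hbelow; lra]. }
    destruct (proj1 (at_right_iff s P) (Hopen s ltac:(lra) Hupto)) as [d [Hd Hright]].
    set (x := Rmin (s + d / 2) b).
    assert (Hx : s < x <= b) by (unfold x; split; [apply Rmin_glb_lt|apply Rmin_r]; lra).
    enough (x <= s) by lra.
    apply Hub. split; [lra|]. intros t Ht.
    destruct (Rtotal_order t s) as [Hts|[->|Hst]]; [apply Hbelow; lra|exact HPs|].
    apply Hright. pose proof (Rmin_l (s + d / 2) b). unfold x in *. lra. }
  intros x Hx. destruct (Req_dec x b) as [->|Hxb]; [rewrite <- Hs; exact HPs|].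
  apply Hbelow. lra.
Qed.

Lemma cont_on_01_at_right (g : R -> R) x : cont_on_01 g -> 0 <= x < 1 ->
  filterlim g (at_right x) (locally (g x)).
Proof.
  intros Hg Hx. apply (filterlim_filter_le_1 g (G := at_right x)
    (F := within (fun t => 0 <= t <= 1) (locally x))); [|apply Hg; lra].
  intros P HP. apply at_right_iff. destruct HP as [d Hd].
  exists (Rmin d (1 - x)). split; [apply Rmin_pos; [apply cond_pos|lra]|].
  intros t Ht. pose proof (Rmin_l d (1 - x)). pose proof (Rmin_r d (1 - x)).
  apply Hd; [|lra]. apply ball_R. rewrite Rabs_right; lra.
Qed.

Lemma cont_on_01_at_left (g : R -> R) x : cont_on_01 g -> 0 < x <= 1 ->
  filterlim g (at_left x) (locally (g x)).
Proof.
  intros Hg Hx. apply (filterlim_filter_le_1 g (G := at_left x)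
    (F := within (fun t => 0 <= t <= 1) (locally x))); [|apply Hg; lra].
  intros P HP. apply at_left_iff. destruct HP as [d Hd].
  exists (Rmin d x). split; [apply Rmin_pos; [apply cond_pos|lra]|].
  intros t Ht. pose proof (Rmin_l d x). pose proof (Rmin_r d x).
  apply Hd; [|lra]. apply ball_R. rewrite Rabs_left; lra.
Qed.

Lemma cont_on_01_comp (G g : R -> R) : (forall y, continuous G y) -> cont_on_01 g ->
  cont_on_01 (fun r => G (g r)).
Proof. intros HG Hg r Hr. exact (filterlim_comp _ _ _ g G _ _ _ (Hg r Hr) (HG (g r))). Qed.

Lemma cont_on_01_mult (g h : R -> R) : cont_on_01 g -> cont_on_01 h ->
  cont_on_01 (fun r => g r * h r).
Proof.
  intros Hg Hh r Hr.
  exact (filterlim_comp_2 g h Rmult (Hg r Hr) (Hh r Hr) (filterlim_mult (K := R_AbsRing) _ _)).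
Qed.

Definition clamp01 (x : R) : R := Rmax 0 (Rmin 1 x).

Lemma clamp01_range x : 0 <= clamp01 x <= 1.
Proof. unfold clamp01, Rmax, Rmin. repeat destruct Rle_dec; lra. Qed.

Lemma clamp01_id x : 0 <= x <= 1 -> clamp01 x = x.
Proof. intros Hx. unfold clamp01, Rmax, Rmin. repeat destruct Rle_dec; lra. Qed.

Lemma clamp01_lipschitz x y : Rabs (clamp01 y - clamp01 x) <= Rabs (y - x).
Proof.
  unfold clamp01, Rmax, Rmin. unfold Rabs.
  repeat destruct Rle_dec; repeat destruct Rcase_abs; lra.
Qed.

(* One-sided continuity at 0 and 1 makes [g] composed with the clamp continuous on R,
   so that [bounded_continuity] applies. *)
Lemma cont_on_01_bounded (g : R -> R) : cont_on_01 g ->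
  exists M, 0 < M /\ forall r, 0 <= r <= 1 -> Rabs (g r) <= M.
Proof.
  intros Hg.
  assert (Hc : forall x, 0 <= x <= 1 ->
            filterlim (fun t => g (clamp01 t)) (locally x) (locally (g (clamp01 x)))).
  { intros x _. apply (filterlim_comp _ _ _ clamp01 g _
      (within (fun t => 0 <= t <= 1) (locally (clamp01 x)))); [|apply Hg, clamp01_range].
    intros P [d Hd]. exists d. intros y Hy. apply Hd; [|apply clamp01_range].
    apply ball_R. apply ball_R in Hy. eapply Rle_lt_trans; [apply clamp01_lipschitz|exact Hy]. }
  destruct (bounded_continuity _ 0 1 Hc) as [M HM].
  exists M. split.
  - pose proof (HM 0 ltac:(lra)) as HM0. change (Rabs (g (clamp01 0)) < M) in HM0.
    pose proof (Rabs_pos (g (clamp01 0))). lra.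
  - intros r Hr. specialize (HM r Hr). rewrite clamp01_id in HM by exact Hr. left; exact HM.
Qed.

Lemma first_zero (g : R -> R) a b : 0 <= a < b -> b <= 1 -> cont_on_01 g -> g b <= 0 ->
  at_right a (fun t => 0 < g t) ->
  exists x, a < x <= b /\ g x = 0 /\ forall t, a < t < x -> 0 < g t.
Proof.
  intros Hab Hb Hg Hgb Hstart. apply NNPP. intros Hnone.
  enough (Hall : forall x, a <= x <= b -> a < x -> 0 < g x) by (specialize (Hall b); lra).
  apply (interval_induction (fun x => a < x -> 0 < g x)); [lra| |].
  - intros x Hx Hbefore Hax.
    assert (Hge : 0 <= g x).
    { apply (lim_ge_const (F := at_left x) g (g x) 0 (cont_on_01_at_left g x Hg ltac:(lra))).
      apply (at_left_of_interval a x); [lra|]. intros t Ht. left. apply Hbefore; lra. }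
    destruct Hge as [Hpos|Hzero]; [exact Hpos|].
    exfalso. apply Hnone. exists x. split; [lra|]. split; [auto|].
    intros t Ht. apply Hbefore; lra.
  - intros x Hx Hupto. destruct (Req_dec x a) as [->|Hxa].
    + revert Hstart. apply filter_imp. auto.
    + generalize (eventually_pos_of_lim (F := at_right x) g (g x)
                   (cont_on_01_at_right g x Hg ltac:(lra)) (Hupto x ltac:(lra) ltac:(lra))).
      apply filter_imp. auto.
Qed.

(** * Radial equations *)

Definition flux (y : R -> R) (r : R) : R := r * Derive y r.

Definition wronskian (y z : R -> R) (r : R) : R := flux y r * z r - y r * flux z r.

Lemma wronskian_is_derive (y z : R -> R) (a b r : R) :
  is_derive y r (Derive y r) -> is_derive z r (Derive z r) ->
  is_derive (flux y) r (- r * a) -> is_derive (flux z) r (- r * b) ->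
  is_derive (wronskian y z) r (r * (y r * b - z r * a)).
Proof.
  intros Hy Hz Hfy Hfz. evar_last.
  - exact (is_derive_minus _ _ r _ _ (is_derive_mult _ _ r _ _ Hfy Hz Rmult_comm)
                                     (is_derive_mult _ _ r _ _ Hy Hfz Rmult_comm)).
  - unfold flux, minus, plus, opp, mult. simpl. ring.
Qed.

Section Radial.
Variables (q : R -> R -> R) (y : R -> R).
Hypothesis Hy : radial_solution q y.

Lemma radial_cont : cont_on_01 y.
Proof. apply Hy. Qed.

Lemma radial_vanishes_at_1 : filterlim y (at_left 1) (locally 0).
Proof.
  destruct Hy as [Hc [_ [_ [_ Hy1]]]]. rewrite <- Hy1.
  apply cont_on_01_at_left; [exact Hc|lra].
Qed.

Lemma radial_is_derive r : 0 < r < 1 -> is_derive y r (Derive y r).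
Proof. intros Hr. apply Derive_correct, (proj2 Hy), Hr. Qed.

Lemma flux_is_derive r : 0 < r < 1 -> is_derive (flux y) r (- r * q r (y r)).
Proof.
  intros Hr. destruct Hy as [_ [Hd [Hode _]]].
  specialize (Hode r Hr). destruct (Hd r Hr) as [_ Hd2]. evar_last.
  - exact (is_derive_mult (fun t => t) (Derive y) r _ _ (is_derive_id r)
             (Derive_correct _ _ Hd2) Rmult_comm).
  - unfold plus, mult, one. simpl.
    replace (Derive (Derive y) r) with (- / r * Derive y r - q r (y r)) by lra.
    field. lra.
Qed.

Lemma flux_sub_bound M s t : 0 < s < t -> t < 1 ->
  (forall c, s < c < t -> Rabs (q c (y c)) <= M) ->
  Rabs (flux y t - flux y s) <= M * (t - s).
Proof.
  intros Hs Ht HM.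
  apply (abs_sub_le_of_deriv_bound _ (fun r => - r * q r (y r))); [lra| |].
  - intros c Hc. apply flux_is_derive. lra.
  - intros c Hc. rewrite Rabs_mult, Rabs_Ropp, Rabs_right by lra.
    pose proof (HM c Hc). pose proof (Rabs_pos (q c (y c))).
    apply Rle_trans with (1 * Rabs (q c (y c))); [apply Rmult_le_compat_r|]; lra.
Qed.

(* On [r/2, r] the mean value theorem bounds the flux at some point by the oscillation
   of y, and the bound on q controls its variation up to r. *)
Lemma flux_vanishes_at_0 M : (forall c, 0 < c < 1 -> Rabs (q c (y c)) <= M) ->
  filterlim (flux y) (at_right 0) (locally 0).
Proof.
  intros HM. apply filterlim_locally. intros [eps Heps]. simpl.
  assert (HM0 : 0 <= M).
  { pose proof (HM (1 / 2) ltac:(lra)). pose proof (Rabs_pos (q (1 / 2) (y (1 / 2)))). lra. }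
  destruct (proj1 (at_right_iff 0 _) (proj1 (filterlim_locally (F := at_right 0) y (y 0))
      (cont_on_01_at_right y 0 radial_cont ltac:(lra)) (mkposreal (eps / 8) ltac:(lra))))
    as [d [Hd Hy0]].
  set (e := eps / (2 * (M + 1))).
  assert (He : 0 < e) by (unfold e; apply Rdiv_lt_0_compat; lra).
  apply at_right_iff. exists (Rmin (Rmin d 1) e).
  pose proof (Rmin_l (Rmin d 1) e). pose proof (Rmin_r (Rmin d 1) e).
  pose proof (Rmin_l d 1). pose proof (Rmin_r d 1).
  split; [repeat apply Rmin_pos; lra|]. intros r Hr. apply ball_R. rewrite Rminus_0_r.
  destruct (mean_value y (Derive y) (r / 2) r ltac:(lra)) as [t [Ht Et]].
  { intros c Hc. apply radial_is_derive. lra. }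
  assert (Hosc : Rabs (y r - y (r / 2)) < eps / 4).
  { assert (Hr0 : Rabs (y r - y 0) < eps / 8) by exact (Hy0 r ltac:(lra)).
    assert (Hr2 : Rabs (y (r / 2) - y 0) < eps / 8) by exact (Hy0 (r / 2) ltac:(lra)).
    replace (y r - y (r / 2)) with ((y r - y 0) - (y (r / 2) - y 0)) by ring.
    eapply Rle_lt_trans; [apply Rabs_triang|]. rewrite Rabs_Ropp. lra. }
  assert (Ht_flux : Rabs (flux y t) < eps / 2).
  { rewrite Et, Rabs_mult, (Rabs_right (r - r / 2)) in Hosc by lra.
    unfold flux. rewrite Rabs_mult, Rabs_right by lra.
    pose proof (Rabs_pos (Derive y t)). nra. }
  assert (Hvar : Rabs (flux y r - flux y t) <= M * r).
  { apply Rle_trans with (M * (r - t)).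
    { apply flux_sub_bound; [lra|lra|]. intros c Hc. apply HM. lra. }
    apply Rmult_le_compat_l; lra. }
  assert (HMr : M * r < eps / 2).
  { apply Rle_lt_trans with (M * e); [apply Rmult_le_compat_l; lra|].
    unfold e. apply Rmult_lt_reg_r with (2 * (M + 1)); [lra|].
    field_simplify; [nra|lra]. }
  replace (flux y r) with ((flux y r - flux y t) + flux y t) by ring.
  eapply Rle_lt_trans; [apply Rabs_triang|]. lra.
Qed.

Lemma flux_bound_at_right M x0 t : 0 <= x0 < t -> t < 1 ->
  filterlim (flux y) (at_right x0) (locally 0) ->
  (forall c, x0 < c < t -> Rabs (q c (y c)) <= M) ->
  Rabs (flux y t) <= M * (t - x0).
Proof.
  intros Hx0 Ht Hlim HM.
  assert (HM0 : 0 <= M).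
  { set (m := (x0 + t) / 2). pose proof (HM m ltac:(unfold m; lra)).
    pose proof (Rabs_pos (q m (y m))). lra. }
  rewrite <- (Rminus_0_r (flux y t)).
  apply (abs_sub_le_of_at_right (flux y) x0 t 0); [lra|exact Hlim|].
  intros s Hs. apply Rle_trans with (M * (t - s)).
  - apply flux_sub_bound; [lra|lra|]. intros c Hc. apply HM. lra.
  - apply Rmult_le_compat_l; lra.
Qed.

Lemma flux_vanishes_after_zeros x : 0 < x < 1 -> at_left x (fun t => y t = 0) ->
  filterlim (flux y) (at_right x) (locally 0).
Proof.
  intros Hx Hzeros.
  assert (Hcont : continuous (flux y) x).
  { apply (ex_derive_continuous (K := R_AbsRing) (V := R_NormedModule)).
    eexists. apply flux_is_derive, Hx. }
  assert (Hflux_x : flux y x = 0).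
  { apply (lim_eq_const (F := at_left x) (flux y)).
    - exact (filterlim_filter_le_1 _ (filter_le_within (F := locally x) _) Hcont).
    - apply at_left_iff in Hzeros. destruct Hzeros as [d [Hd Hz]].
      apply at_left_iff. exists d. split; [exact Hd|]. intros t Ht.
      unfold flux. rewrite (Derive_ext_loc y (fun _ => 0)), Derive_const; [ring|].
      generalize (open_and _ _ (open_gt (x - d)) (open_lt x) t Ht). apply filter_imp.
      exact Hz. }
  rewrite <- Hflux_x. exact (filterlim_filter_le_1 _ (filter_le_within (F := locally x) _) Hcont).
Qed.

Section Bounded_source.
Hypothesis Hq : cont_on_01 (fun r => q r (y r)).

Lemma radial_flux_vanishes_at_0 : filterlim (flux y) (at_right 0) (locally 0).
Proof.
  destruct (cont_on_01_bounded _ Hq) as [M [_ HM]].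
  apply (flux_vanishes_at_0 M). intros c Hc. apply HM. lra.
Qed.

Lemma radial_flux_bounded : exists M, forall r, 0 < r < 1 -> Rabs (flux y r) <= M.
Proof.
  destruct (cont_on_01_bounded _ Hq) as [M [HM0 HM]]. exists M. intros r Hr.
  apply Rle_trans with (M * (r - 0)).
  - apply (flux_bound_at_right M 0 r); [lra|lra|exact radial_flux_vanishes_at_0|].
    intros c Hc. apply HM. lra.
  - apply Rle_trans with (M * 1); [apply Rmult_le_compat_l|]; lra.
Qed.

End Bounded_source.
End Radial.

Lemma radial_solution_opp (a w : R -> R) :
  radial_solution (fun r y => a r * y) w ->
  radial_solution (fun r y => a r * y) (fun r => - w r).
Proof.
  intros [Hc [Hd [Hode [Hd0 Hw1]]]].
  assert (ED : forall t, Derive (fun x => - w x) t = - Derive w t) by (intros; apply Derive_opp).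
  assert (EDD : forall t, Derive (Derive (fun x => - w x)) t = - Derive (Derive w) t).
  { intros t. rewrite (Derive_ext _ _ t ED). apply Derive_opp. }
  split; [|split; [|split; [|split]]].
  - apply (cont_on_01_comp Ropp w); [|exact Hc].
    intros y. exact (filterlim_opp (V := R_NormedModule) y).
  - intros r Hr. destruct (Hd r Hr) as [Hd1 Hd2]. split.
    + exact (ex_derive_opp (K := R_AbsRing) (V := R_NormedModule) w r Hd1).
    + apply (ex_derive_ext (fun t => - Derive w t)); [intros; rewrite ED; reflexivity|].
      exact (ex_derive_opp (K := R_AbsRing) (V := R_NormedModule) _ r Hd2).
  - intros r Hr. rewrite EDD, ED. specialize (Hode r Hr). lra.
  - unfold rderiv0_zero in *. pose proof (filterlim_opp_R _ 0 Hd0) as Hopp.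
    rewrite Ropp_0 in Hopp. revert Hopp. apply filterlim_ext. intros h.
    unfold Rdiv. ring.
  - rewrite Hw1. apply Ropp_0.
Qed.

Section Linear.
Variables (a w : R -> R).
Hypothesis Ha : cont_on_01 a.
Hypothesis Hw : radial_solution (fun r y => a r * y) w.

Lemma linear_source_cont : cont_on_01 (fun r => a r * w r).
Proof. exact (cont_on_01_mult a w Ha (radial_cont _ _ Hw)). Qed.

Lemma linear_growth_bound x0 t A B : 0 <= x0 < t -> t < 1 -> w x0 = 0 ->
  filterlim (flux w) (at_right x0) (locally 0) ->
  (forall c, x0 < c < t -> Rabs (a c) <= A) -> (forall c, x0 < c < t -> Rabs (w c) <= B) ->
  Rabs (w t) <= A * B * (t - x0).
Proof.
  intros Hx0 Ht Hw0 Hflux HA HB.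
  assert (HAB : forall c, x0 < c < t -> Rabs (a c * w c) <= A * B).
  { intros c Hc. rewrite Rabs_mult.
    apply Rmult_le_compat; [apply Rabs_pos|apply Rabs_pos|apply HA, Hc|apply HB, Hc]. }
  assert (HAB0 : 0 <= A * B).
  { set (m := (x0 + t) / 2). pose proof (HAB m ltac:(unfold m; lra)).
    pose proof (Rabs_pos (a m * w m)). lra. }
  assert (Hderiv : forall c, x0 < c < t -> Rabs (Derive w c) <= A * B).
  { intros c Hc.
    assert (Hfc : Rabs (flux w c) <= A * B * (c - x0)).
    { apply (flux_bound_at_right _ _ Hw); [lra|lra|exact Hflux|]. intros c' Hc'. apply HAB. lra. }
    unfold flux in Hfc. rewrite Rabs_mult, Rabs_right in Hfc by lra.
    apply Rmult_le_reg_l with c; [lra|]. nra. }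
  replace (w t) with (w t - w x0) by (rewrite Hw0; ring).
  apply (abs_sub_le_of_at_right w x0 t); [lra| |].
  { apply cont_on_01_at_right; [exact (radial_cont _ _ Hw)|lra]. }
  intros s Hs. apply Rle_trans with (A * B * (t - s)).
  - apply (abs_sub_le_of_deriv_bound w (Derive w)); [lra| |].
    + intros c Hc. apply (radial_is_derive _ _ Hw). lra.
    + intros c Hc. apply Hderiv. lra.
  - apply Rmult_le_compat_l; lra.
Qed.

(* On an interval of length rho with A rho <= 1/2, [linear_growth_bound] halves every
   bound on |w|. *)
Lemma linear_local_uniqueness x0 : 0 <= x0 < 1 -> w x0 = 0 ->
  filterlim (flux w) (at_right x0) (locally 0) -> at_right x0 (fun t => w t = 0).
Proof.
  intros Hx0 Hw0 Hflux.
  destruct (cont_on_01_bounded a Ha) as [A [HA0 HA]].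
  destruct (cont_on_01_bounded w (radial_cont _ _ Hw)) as [K [_ HK]].
  set (rho := Rmin (1 - x0) (/ (2 * A))).
  assert (Hinv : 0 < / (2 * A)) by (apply Rinv_0_lt_compat; lra).
  assert (Hrho : 0 < rho) by (apply Rmin_pos; lra).
  assert (Hrho1 : rho <= 1 - x0) by apply Rmin_l.
  assert (HArho : A * rho <= / 2).
  { apply Rle_trans with (A * / (2 * A)); [apply Rmult_le_compat_l; [lra|apply Rmin_r]|].
    right. field. lra. }
  assert (Hhalf : forall n t, x0 < t < x0 + rho -> Rabs (w t) <= K * (/ 2) ^ n).
  { induction n as [|n IH]; intros t Ht.
    - rewrite pow_O, Rmult_1_r. apply HK. lra.
    - assert (HB : 0 <= K * (/ 2) ^ n).
      { pose proof (IH t Ht). pose proof (Rabs_pos (w t)). lra. }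
      apply Rle_trans with (A * (K * (/ 2) ^ n) * (t - x0)).
      + apply linear_growth_bound; [lra|lra|exact Hw0|exact Hflux| |].
        * intros c Hc. apply HA. lra.
        * intros c Hc. apply IH. lra.
      + apply Rle_trans with (A * rho * (K * (/ 2) ^ n)).
        * replace (A * rho * (K * (/ 2) ^ n)) with (A * (K * (/ 2) ^ n) * rho) by ring.
          apply Rmult_le_compat_l; [apply Rmult_le_pos|]; lra.
        * rewrite <- tech_pow_Rmult.
          replace (K * (/ 2 * (/ 2) ^ n)) with (/ 2 * (K * (/ 2) ^ n)) by ring.
          apply Rmult_le_compat_r; [exact HB|exact HArho]. }
  apply (at_right_of_interval x0 (x0 + rho)); [lra|]. intros t Ht.
  apply (eq_0_of_geometric_bound (w t) K). intros n. apply Hhalf, Ht.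
Qed.

Lemma linear_uniqueness : w 0 = 0 -> forall r, 0 <= r <= 1 -> w r = 0.
Proof.
  intros Hw0. apply (interval_induction (fun r => w r = 0)); [lra| |].
  - intros x Hx Hbefore. destruct (Req_dec x 0) as [->|Hx0]; [exact Hw0|].
    apply (lim_eq_const (F := at_left x) w (w x) 0).
    + apply cont_on_01_at_left; [exact (radial_cont _ _ Hw)|lra].
    + apply (at_left_of_interval 0 x); [lra|]. intros t Ht. apply Hbefore. lra.
  - intros x Hx Hupto. apply linear_local_uniqueness; [lra|apply Hupto; lra|].
    destruct (Req_dec x 0) as [->|Hx0].
    + exact (radial_flux_vanishes_at_0 _ _ Hw linear_source_cont).
    + apply (flux_vanishes_after_zeros _ _ Hw); [lra|].
      apply (at_left_of_interval 0 x); [lra|]. intros t Ht. apply Hupto. lra.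
Qed.

End Linear.

(** * Non-degeneracy *)

Lemma ratio_deriv_increasing (f : R -> R) :
  (forall x, 0 < x -> ex_derive f x) -> (forall x, 0 < x -> ex_derive (Derive f) x) ->
  (forall x, 0 < x -> 0 < Derive f x) ->
  (forall x, 0 < x -> Derive (Derive f) x * f x - Derive f x ^ 2 < 0) ->
  forall x y, 0 < x < y -> f x / Derive f x < f y / Derive f y.
Proof.
  intros Hd Hd2 Hpos Hlc x y Hxy.
  apply (lt_of_deriv_pos (fun z => f z / Derive f z)
    (fun z => (Derive f z * Derive f z - f z * Derive (Derive f) z) / Derive f z ^ 2)); [lra| |].
  - intros c Hc. pose proof (Hpos c ltac:(lra)).
    apply is_derive_div; [apply Derive_correct, Hd; lra|apply Derive_correct, Hd2; lra|lra].
  - intros c Hc. pose proof (Hpos c ltac:(lra)). pose proof (Hlc c ltac:(lra)).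
    apply Rdiv_lt_0_compat; nra.
Qed.

Section Nondegeneracy.
Variables f u w : R -> R.
Hypothesis f_deriv : forall x, ex_derive f x.
Hypothesis f_deriv2 : forall x, ex_derive (Derive f) x.
Hypothesis f_pos : forall x, 0 < x -> 0 < f x.
Hypothesis f_deriv_pos : forall x, 0 < x -> 0 < Derive f x.
Hypothesis f_log_concave : forall x, 0 < x -> Derive (Derive f) x * f x - Derive f x ^ 2 < 0.
Hypothesis f_superlinear : forall x, 0 < x -> x * Derive f x > f x.
Hypothesis u_sol : radial_solution (fun _ y => f y) u.
Hypothesis u_pos : forall r, 0 <= r < 1 -> 0 < u r.
Hypothesis w_sol : radial_solution (fun r y => Derive f (u r) * y) w.

Lemma f_u_cont : cont_on_01 (fun r => f (u r)).
Proof.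
  apply (cont_on_01_comp f u); [|exact (radial_cont _ _ u_sol)].
  intros y. apply (ex_derive_continuous (K := R_AbsRing) (V := R_NormedModule)), f_deriv.
Qed.

Lemma f_deriv_u_cont : cont_on_01 (fun r => Derive f (u r)).
Proof.
  apply (cont_on_01_comp (Derive f) u); [|exact (radial_cont _ _ u_sol)].
  intros y. apply (ex_derive_continuous (K := R_AbsRing) (V := R_NormedModule)), f_deriv2.
Qed.

Lemma w_source_cont : cont_on_01 (fun r => Derive f (u r) * w r).
Proof. exact (linear_source_cont _ _ f_deriv_u_cont w_sol). Qed.

Lemma flux_u_vanishes_at_0 : filterlim (flux u) (at_right 0) (locally 0).
Proof. exact (radial_flux_vanishes_at_0 _ _ u_sol f_u_cont). Qed.

Lemma flux_w_vanishes_at_0 : filterlim (flux w) (at_right 0) (locally 0).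
Proof. exact (radial_flux_vanishes_at_0 _ _ w_sol w_source_cont). Qed.

Lemma flux_u_neg r : 0 < r < 1 -> flux u r < 0.
Proof.
  apply (lim_right_gt_of_deriv_neg (flux u) (fun r => - r * f (u r)) 0 1).
  - intros c Hc. apply (flux_is_derive _ _ u_sol c Hc).
  - intros c Hc. pose proof (f_pos (u c) (u_pos c ltac:(lra))). nra.
  - exact flux_u_vanishes_at_0.
Qed.

Lemma flux_u_decreasing s t : 0 < s < t -> t < 1 -> flux u t < flux u s.
Proof.
  intros Hs Ht. apply (lt_of_deriv_neg _ (fun r => - r * f (u r))); [lra| |].
  - intros c Hc. apply (flux_is_derive _ _ u_sol). lra.
  - intros c Hc. pose proof (f_pos (u c) (u_pos c ltac:(lra))). nra.
Qed.

Lemma u_decreasing s t : 0 < s < t -> t < 1 -> u t < u s.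
Proof.
  intros Hs Ht. apply (lt_of_deriv_neg _ (Derive u)); [lra| |].
  - intros c Hc. apply (radial_is_derive _ _ u_sol). lra.
  - intros c Hc. pose proof (flux_u_neg c ltac:(lra)). unfold flux in *. nra.
Qed.

Lemma wronskian_u_w_is_derive r : 0 < r < 1 ->
  is_derive (wronskian u w) r (r * w r * (u r * Derive f (u r) - f (u r))).
Proof.
  intros Hr.
  replace (r * w r * (u r * Derive f (u r) - f (u r)))
    with (r * (u r * (Derive f (u r) * w r) - w r * f (u r))) by ring.
  apply wronskian_is_derive.
  - exact (radial_is_derive _ _ u_sol r Hr).
  - exact (radial_is_derive _ _ w_sol r Hr).
  - exact (flux_is_derive _ _ u_sol r Hr).
  - exact (flux_is_derive _ _ w_sol r Hr).
Qed.

Lemma wronskian_u_w_vanishes_at_0 : filterlim (wronskian u w) (at_right 0) (locally 0).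
Proof.
  destruct (cont_on_01_bounded u (radial_cont _ _ u_sol)) as [Ku [_ HKu]].
  destruct (cont_on_01_bounded w (radial_cont _ _ w_sol)) as [Kw [_ HKw]].
  apply filterlim_minus_0.
  - apply (filterlim_mult_bounded_0 _ w Kw).
    + exact flux_u_vanishes_at_0.
    + apply (at_right_of_interval 0 1); [lra|]. intros r Hr. apply HKw. lra.
  - apply (filterlim_bounded_mult_0 _ u Ku).
    + apply (at_right_of_interval 0 1); [lra|]. intros r Hr. apply HKu. lra.
    + exact flux_w_vanishes_at_0.
Qed.

Lemma wronskian_u_w_vanishes_at_1 : filterlim (wronskian u w) (at_left 1) (locally 0).
Proof.
  destruct (radial_flux_bounded _ _ u_sol f_u_cont) as [Mu HMu].
  destruct (radial_flux_bounded _ _ w_sol w_source_cont) as [Mw HMw].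
  apply filterlim_minus_0.
  - apply (filterlim_bounded_mult_0 w _ Mu); [exact (at_left_of_interval 0 1 _ Rlt_0_1 HMu)|].
    exact (radial_vanishes_at_1 _ _ w_sol).
  - apply (filterlim_mult_bounded_0 u _ Mw); [|exact (at_left_of_interval 0 1 _ Rlt_0_1 HMw)].
    exact (radial_vanishes_at_1 _ _ u_sol).
Qed.

Lemma flux_shifted c r : 0 < r < 1 -> flux (fun t => flux u t + c) r = - r * (r * f (u r)).
Proof.
  intros Hr. unfold flux at 1.
  rewrite (is_derive_unique _ r (- r * f (u r))); [ring|].
  evar_last.
  - exact (is_derive_plus _ _ r _ _ (flux_is_derive _ _ u_sol r Hr) (is_derive_const c r)).
  - unfold plus, zero. simpl. ring.
Qed.

Lemma flux_shifted_is_derive c r : 0 < r < 1 ->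
  is_derive (flux (fun t => flux u t + c)) r (- r * (2 * f (u r) + Derive f (u r) * flux u r)).
Proof.
  intros Hr.
  apply (is_derive_ext_loc (fun t => - t * (t * f (u t)))).
  - generalize (open_and _ _ (open_gt 0) (open_lt 1) r Hr). apply filter_imp.
    intros t Ht. symmetry. apply flux_shifted, Ht.
  - pose proof (radial_is_derive _ _ u_sol r Hr) as Hu.
    auto_derive; change (fun x : R => u x) with u; change (fun x : R => f x) with f.
    + split; [apply f_deriv|]. split; [eexists; exact Hu|exact I].
    + unfold flux. ring.
Qed.

Lemma shifted_wronskian_is_derive c r : 0 < r < 1 ->
  is_derive (wronskian (fun t => flux u t + c) w) r
            (r * w r * (c * Derive f (u r) - 2 * f (u r))).
Proof.
  intros Hr.
  replace (r * w r * (c * Derive f (u r) - 2 * f (u r)))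
    with (r * ((flux u r + c) * (Derive f (u r) * w r)
               - w r * (2 * f (u r) + Derive f (u r) * flux u r))) by ring.
  apply (wronskian_is_derive (fun t => flux u t + c) w).
  - apply Derive_correct. eexists.
    exact (is_derive_plus _ _ r _ _ (flux_is_derive _ _ u_sol r Hr) (is_derive_const c r)).
  - exact (radial_is_derive _ _ w_sol r Hr).
  - exact (flux_shifted_is_derive c r Hr).
  - exact (flux_is_derive _ _ w_sol r Hr).
Qed.

Lemma shifted_wronskian_vanishes_at_0 c :
  filterlim (wronskian (fun t => flux u t + c) w) (at_right 0) (locally 0).
Proof.
  destruct (cont_on_01_bounded _ f_u_cont) as [Kf [_ HKf]].
  destruct (cont_on_01_bounded w (radial_cont _ _ w_sol)) as [Kw [_ HKw]].
  destruct (radial_flux_bounded _ _ u_sol f_u_cont) as [Mu HMu].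
  apply (filterlim_ext_loc (fun r => r * - (r * f (u r) * w r) - (flux u r + c) * flux w r)).
  { apply (at_right_of_interval 0 1); [lra|]. intros r Hr.
    unfold wronskian. rewrite flux_shifted by lra. ring. }
  apply filterlim_minus_0.
  - apply (filterlim_mult_bounded_0 _ _ (Kf * Kw)).
    + exact (filterlim_filter_le_1 _ (filter_le_within (F := locally 0) _) (filterlim_id _ _)).
    + apply (at_right_of_interval 0 1); [lra|]. intros r Hr.
      rewrite Rabs_Ropp, !Rabs_mult, Rabs_right by lra.
      pose proof (HKf r ltac:(lra)). pose proof (Rabs_pos (f (u r))).
      apply Rmult_le_compat; [nra|apply Rabs_pos|nra|apply HKw; lra].
  - apply (filterlim_bounded_mult_0 _ _ (Mu + Rabs c)).
    + apply (at_right_of_interval 0 1); [lra|]. intros r Hr. pose proof (HMu r Hr).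
      eapply Rle_trans; [apply Rabs_triang|lra].
    + exact flux_w_vanishes_at_0.
Qed.

Section Sign_change.
Variable x1 : R.
Hypothesis x1_range : 0 < x1 <= 1.
Hypothesis w_x1 : w x1 = 0.
Hypothesis w_pos_before : forall t, 0 < t < x1 -> 0 < w t.

Lemma wronskian_u_w_deriv_pos r : 0 < r < x1 ->
  0 < r * w r * (u r * Derive f (u r) - f (u r)).
Proof.
  intros Hr. pose proof (w_pos_before r Hr). pose proof (f_superlinear (u r) (u_pos r ltac:(lra))).
  apply Rmult_lt_0_compat; [apply Rmult_lt_0_compat|]; lra.
Qed.

Lemma wronskian_u_w_pos t : 0 < t < x1 -> 0 < wronskian u w t.
Proof.
  apply (lim_right_lt_of_deriv_pos _ (fun r => r * w r * (u r * Derive f (u r) - f (u r))) 0 x1).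
  - intros c Hc. apply wronskian_u_w_is_derive. lra.
  - exact wronskian_u_w_deriv_pos.
  - exact wronskian_u_w_vanishes_at_0.
Qed.

Lemma first_zero_lt_1 : x1 < 1.
Proof.
  destruct (Rlt_or_le x1 1) as [Hlt|Hge]; [exact Hlt|exfalso].
  assert (Hneg : wronskian u w (1 / 2) < 0).
  { apply (lim_left_gt_of_deriv_pos _ (fun r => r * w r * (u r * Derive f (u r) - f (u r))) 0 1).
    - intros c Hc. apply wronskian_u_w_is_derive, Hc.
    - intros c Hc. apply wronskian_u_w_deriv_pos. lra.
    - exact wronskian_u_w_vanishes_at_1.
    - lra. }
  pose proof (wronskian_u_w_pos (1 / 2) ltac:(lra)). lra.
Qed.

Lemma wronskian_u_w_pos_at_x1 : 0 < wronskian u w x1.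
Proof.
  pose proof first_zero_lt_1.
  apply Rlt_trans with (wronskian u w (x1 / 2)); [apply wronskian_u_w_pos; lra|].
  apply (lt_of_deriv_pos _ (fun r => r * w r * (u r * Derive f (u r) - f (u r)))); [lra| |].
  - intros c Hc. apply wronskian_u_w_is_derive. lra.
  - intros c Hc. apply wronskian_u_w_deriv_pos. lra.
Qed.

(* At x1 the Wronskian of u and w reduces to - u(x1) x1 w'(x1). *)
Lemma w_neg_after_x1 : at_right x1 (fun t => w t < 0).
Proof.
  pose proof first_zero_lt_1. pose proof wronskian_u_w_pos_at_x1 as HW.
  pose proof (u_pos x1 ltac:(lra)).
  unfold wronskian, flux in HW. rewrite w_x1 in HW.
  apply (eventually_neg_of_deriv_neg w x1 (Derive w x1)); [| |exact w_x1].
  - apply (radial_is_derive _ _ w_sol). lra.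
  - apply Rnot_le_lt. intros Hnn.
    assert (0 <= u x1 * (x1 * Derive w x1)) by (apply Rmult_le_pos; [|apply Rmult_le_pos]; lra).
    lra.
Qed.

Variable x2 : R.
Hypothesis x2_range : x1 < x2 <= 1.
Hypothesis w_x2 : w x2 = 0.
Hypothesis w_neg_between : forall t, x1 < t < x2 -> w t < 0.

(* v = r u' + c vanishes at x1 and solves v'' + v'/r + f'(u) v = c f'(u) - 2 f(u), so its
   Wronskian with w vanishes at 0+ and at x1. *)
Let c := - flux u x1.
Let shifted_wronskian := wronskian (fun t => flux u t + c) w.

Lemma shifted_wronskian_at_x1 : shifted_wronskian x1 = 0.
Proof. unfold shifted_wronskian, wronskian, c. rewrite w_x1. ring. Qed.

Lemma exists_coef_nonneg : exists s, 0 < s < x1 /\ 2 * f (u s) <= c * Derive f (u s).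
Proof.
  apply NNPP. intros Hnone.
  assert (Hderiv : forall r, 0 < r < x1 -> r * w r * (c * Derive f (u r) - 2 * f (u r)) < 0).
  { intros r Hr. pose proof (w_pos_before r Hr).
    assert (c * Derive f (u r) - 2 * f (u r) < 0).
    { apply Rnot_le_lt. intros Hle. apply Hnone. exists r. split; [exact Hr|lra]. }
    assert (0 < r * w r) by (apply Rmult_lt_0_compat; lra). nra. }
  pose proof first_zero_lt_1.
  assert (Hneg : shifted_wronskian (x1 / 2) < 0).
  { apply (lim_right_gt_of_deriv_neg _
      (fun r => r * w r * (c * Derive f (u r) - 2 * f (u r))) 0 x1).
    - intros r Hr. apply shifted_wronskian_is_derive. lra.
    - exact Hderiv.
    - apply shifted_wronskian_vanishes_at_0.
    - lra. }
  assert (Hdecr : shifted_wronskian x1 < shifted_wronskian (x1 / 2)).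
  { apply (lt_of_deriv_neg _ (fun r => r * w r * (c * Derive f (u r) - 2 * f (u r)))); [lra| |].
    - intros r Hr. apply shifted_wronskian_is_derive. lra.
    - intros r Hr. apply Hderiv. lra. }
  rewrite shifted_wronskian_at_x1 in Hdecr. lra.
Qed.

(* f/f' increases and u decreases, so the inequality of [exists_coef_nonneg] persists. *)
Lemma coef_pos_after_x1 r : x1 < r < 1 -> 2 * f (u r) < c * Derive f (u r).
Proof.
  intros Hr. destruct exists_coef_nonneg as [s [Hs Hcoef]].
  assert (Hur : 0 < u r) by (apply u_pos; lra).
  assert (Hus : 0 < u s) by (apply u_pos; lra).
  pose proof (u_decreasing s r ltac:(lra) ltac:(lra)).
  pose proof (ratio_deriv_increasing f (fun x _ => f_deriv x) (fun x _ => f_deriv2 x)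
                f_deriv_pos f_log_concave (u r) (u s) ltac:(lra)) as Hratio.
  pose proof (f_deriv_pos (u r) Hur). pose proof (f_deriv_pos (u s) Hus).
  assert (Hs_ratio : f (u s) / Derive f (u s) <= c / 2).
  { apply Rmult_le_reg_r with (2 * Derive f (u s)); [lra|].
    unfold Rdiv. field_simplify; lra. }
  assert (Hr_ratio : f (u r) / Derive f (u r) < c / 2) by lra.
  apply Rmult_lt_reg_r with (/ (2 * Derive f (u r))); [apply Rinv_0_lt_compat; lra|].
  replace (2 * f (u r) * / (2 * Derive f (u r))) with (f (u r) / Derive f (u r)) by (field; lra).
  replace (c * Derive f (u r) * / (2 * Derive f (u r))) with (c / 2) by (field; lra).
  exact Hr_ratio.
Qed.

Lemma shifted_wronskian_neg r : x1 < r < x2 -> shifted_wronskian r < 0.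
Proof.
  intros Hr. rewrite <- shifted_wronskian_at_x1.
  apply (lt_of_deriv_neg _ (fun r => r * w r * (c * Derive f (u r) - 2 * f (u r)))); [lra| |].
  - intros t Ht. apply shifted_wronskian_is_derive. lra.
  - intros t Ht. pose proof (w_neg_between t ltac:(lra)).
    pose proof (coef_pos_after_x1 t ltac:(lra)).
    assert (t * w t < 0) by nra. nra.
Qed.

Lemma deriv_w_neg_between r : x1 < r < x2 -> Derive w r < 0.
Proof.
  intros Hr. pose proof (shifted_wronskian_neg r Hr) as HW.
  unfold shifted_wronskian, wronskian in HW. rewrite flux_shifted in HW by lra.
  pose proof (flux_u_decreasing x1 r ltac:(lra) ltac:(lra)).
  pose proof (f_pos (u r) (u_pos r ltac:(lra))). pose proof (w_neg_between r Hr).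
  assert (Hv : flux u r + c < 0) by (unfold c; lra).
  assert (0 < - r * (r * f (u r)) * w r).
  { assert (0 < r * (r * f (u r))) by (apply Rmult_lt_0_compat; [|apply Rmult_lt_0_compat]; lra).
    nra. }
  assert (flux w r < 0) by nra. unfold flux in *. nra.
Qed.

Lemma sign_change_absurd : False.
Proof.
  set (t := (x1 + x2) / 2).
  assert (Hpos : 0 < w t).
  { rewrite <- w_x2.
    apply (lim_left_lt_of_deriv_neg w (Derive w) x1 x2).
    - intros r Hr. apply (radial_is_derive _ _ w_sol). lra.
    - exact deriv_w_neg_between.
    - apply cont_on_01_at_left; [exact (radial_cont _ _ w_sol)|lra].
    - unfold t. lra. }
  pose proof (w_neg_between t ltac:(unfold t; lra)). lra.
Qed.

End Sign_change.

Lemma w0_not_pos : ~ 0 < w 0.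
Proof.
  intros Hw0. pose proof (radial_cont _ _ w_sol) as Hw.
  destruct (first_zero w 0 1) as [x1 [Hx1 [Hwx1 Hpos]]]; [lra|lra|exact Hw|right; apply w_sol| |].
  { apply (eventually_pos_of_lim (F := at_right 0) w (w 0)); [|exact Hw0].
    apply cont_on_01_at_right; [exact Hw|lra]. }
  pose proof (first_zero_lt_1 x1 Hx1 Hpos).
  destruct (first_zero (fun t => - w t) x1 1) as [x2 [Hx2 [Hwx2 Hneg]]]; [lra|lra| | | |].
  - exact (radial_cont _ _ (radial_solution_opp _ _ w_sol)).
  - destruct w_sol as [_ [_ [_ [_ ->]]]]. lra.
  - generalize (w_neg_after_x1 x1 Hx1 Hwx1 Hpos). apply filter_imp. intros t Ht. lra.
  - apply (sign_change_absurd x1 Hx1 Hwx1 Hpos x2); [lra|lra|].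
    intros t Ht. pose proof (Hneg t Ht). lra.
Qed.

End Nondegeneracy.

Theorem theorem3p2 (f u : R -> R) :
  C2_R f ->
  (forall x, 0 < x -> 0 < f x) ->
  (forall x, 0 < x -> 0 < Derive f x) ->
  (forall x, 0 < x -> Derive_n f 2 x * f x - (Derive f x) ^ 2 < 0) ->
  (forall x, 0 < x -> x * Derive f x > f x) ->
  (* u is a positive solution of u'' + u'/r + f(u) = 0, u'(0) = u(1) = 0 *)
  radial_solution (fun _ y => f y) u ->
  (forall r, 0 <= r < 1 -> 0 < u r) ->
  (* non-degeneracy: the linearized problem has only the trivial solution *)
  forall w : R -> R,
    radial_solution (fun r y => Derive f (u r) * y) w ->
    forall r, 0 <= r <= 1 -> w r = 0.
Proof.
  intros [Hf [Hf' _]] Hfpos Hf'pos Hlc Hsup Hu Hupos w Hw.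
  destruct (Rtotal_order (w 0) 0) as [Hneg|[Hzero|Hpos]].
  - exfalso. apply (w0_not_pos f u (fun r => - w r)); try assumption.
    + apply radial_solution_opp, Hw.
    + lra.
  - exact (linear_uniqueness _ w (f_deriv_u_cont f u Hf' Hu) Hw Hzero).
  - exfalso. exact (w0_not_pos f u w Hf Hf' Hfpos Hf'pos Hlc Hsup Hu Hupos Hw Hpos).
Qed.
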